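(* Let $\langle D,E,e,\varepsilon\rangle$ be a restricted Priestley duality between a variety $\mathcal A$ and a category $\mathcal X$. Let $\mathbb X_1,\mathbb X_2,\mathbb Y\in\mathcal X$ and set $\mathbf A_1:=E(\mathbb X_1)$, $\mathbf A_2:=E(\mathbb X_2)$. (1) Let $\phi_1\colon\mathbb X_1\to\mathbb Y$, $\phi_2\colon\mathbb X_2\to\mathbb Y$ be jointly $\mathcal P$-surjective morphisms. Then $B(\phi_1,\phi_2):=\{(\alpha\circ\phi_1^\flat,\alpha\circ\phi_2^\flat)\mid \alpha\in\mathcal P(\mathbb Y^\flat,\mathbbm 2)\}\subseteq \mathcal P(\mathbb X_1^\flat,\mathbbm 2)\times\mathcal P(\mathbb X_2^\flat,\mathbbm 2)$ is the universe of a subalgebra $\mathbf B(\phi_1,\phi_2)$ of $\mathbf A_1\times\mathbf A_2$, and the map $\alpha\mapsto(\alpha\circ\phi_1^\flat,\alpha\circ\phi_2^\flat)$ is an isomorphism from $E(\mathbb Y)$ onto $\mathbf B(\phi_1,\phi_2)$. (2) Let $\mathbf B$ be a subalgebra of $\mathbf A_1\times\mathbf A_2$, let $\mathbb Y:=D(\mathbf B)$, and for $i\in\{1,2\}$ let $\rho_i\colon\mathbf B\to\mathbf A_i$ be the projection and $\varphi_i:=D(\rho_i)\circ\varepsilon_{\mathbb X_i}\colon\mathbb X_i\to\mathbb Y$. Then $\varphi_1,\varphi_2$ are jointly $\mathcal P$-surjective and $B=B(\varphi_1,\varphi_2)$. (3) If $\phi_1\colon\mathbb X_1\to\mathbb Y$,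 $\phi_2\colon\mathbb X_2\to\mathbb Y$ are jointly $\mathcal P$-surjective, then $B(\phi_1,\phi_2)=B_1\times B_2$ for some subalgebras $\mathbf B_1$ of $\mathbf A_1$ and $\mathbf B_2$ of $\mathbf A_2$ if and only if $\mathbb Y^\flat=\phi_1^\flat(\mathbb X_1^\flat)\,\dot\cup\,\phi_2^\flat(\mathbb X_2^\flat)$. (4) If $\phi_1\colon\mathbb X_1\to\mathbb Y$, $\phi_2\colon\mathbb X_2\to\mathbb Y$ are jointly $\mathcal P$-surjective, then $B(\phi_1,\phi_2)$ is the graph of a one-to-one partial map from $A_1$ to $A_2$ if and only if both $\phi_1$ and $\phi_2$ are $\mathcal P$-surjective. Moreover, if $\mathbb X_1=\mathbb X_2$ (so $\mathbf A:=\mathbf A_1=\mathbf A_2$), then $B(\phi_1,\phi_2)$ is the graph of an identity map on a subset of $A$ if and only if $\phi_1=\phi_2$.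
   Context: $\mathcal D$: bounded distributive lattices; $\mathcal P$: Priestley spaces with continuous order-preserving maps; $\mathbf 2$ the two-element bounded lattice, $\mathbbm 2$ the discrete two-element chain. Priestley duality: $H(\mathbf L)=\mathcal D(\mathbf L,\mathbf 2)$ (order and topology from $\mathbbm 2^L$), $K(\mathbb X)=\mathcal P(\mathbb X,\mathbbm 2)$ (pointwise operations), morphisms by precomposition, unit $e$ and counit $\varepsilon$ given by evaluation. A restricted Priestley duality $\langle D,E,e,\varepsilon\rangle$: $\mathcal A$ is a variety with a term reduct in $\mathcal D$ and forgetful functor ${}^\flat\colon\mathcal A\to\mathcal D$; $\mathcal X$ is a category with a functor ${}^\flat\colon\mathcal X\to\mathcal P$; $D\colon\mathcal A\to\mathcal X$, $E\colon\mathcal X\to\mathcal A$ form a dual equivalence with unit $e\colon\mathrm{id}\to ED$ and counit $\varepsilon\colon\mathrm{id}\to DE$, such that ${}^\flat\circ D=H\circ{}^\flat$, ${}^\flat\circ E=K\circ{}^\flat$ (so the underlying set of $E(\mathbb X)$ is $\mathcal P(\mathbb X^\flat,\mathbbm 2)$), $e_{\mathbf A}^\flat=e_{\mathbf A^\flat}$ and $\varepsilon_{\mathbb X}^\flat=\varepsilon_{\mathbb X^\flat}$. A morphism $\phi$ of $\mathcal X$ is $\mathcal P$-surjective if $\phi^\flat$ is surjective; $\phi_1,\phi_2$ with common codomain $\mathbb Y$ are jointly $\mathcal P$-surjective if the images of $\phi_1^\flat,\phi_2^\flat$ together cover $\mathbb Y^\flat$. $\mathbb Y^\flat=\phi_1^\flat(\mathbb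 X_1^\flat)\,\dot\cup\,\phi_2^\flat(\mathbb X_2^\flat)$ means the two images are disjoint, cover $\mathbb Y^\flat$, and no element of one is comparable to one of the other. *)

From mathcomp Require Import all_boot.
From Stdlib Require Import FunctionalExtensionality.
From Stdlib Require List.
From Stdlib Require Import ProofIrrelevance.
Set Implicit Arguments.
Unset Strict Implicit.
Unset Printing Implicit Defensive.

Record Priestley := {
  pcar :> Type;
  ple : pcar -> pcar -> Prop;
  popen : (pcar -> Prop) -> Prop;
  ple_refl : forall x, ple x x;
  ple_trans : forall x y z, ple x y -> ple y z -> ple x z;
  ple_anti : forall x y, ple x y -> ple y x -> x = y;
  popen_full : popen (fun _ => True);
  popen_inter : forall U W, popen U -> popen W -> popen (fun x => U x /\ W x);
  popen_union : forall F : (pcar -> Prop) -> Prop,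
      (forall U, F U -> popen U) -> popen (fun x => exists U, F U /\ U x);
  pcompact : forall (I : Type) (U : I -> pcar -> Prop),
      (forall i, popen (U i)) -> (forall x, exists i, U i x) ->
      exists s : seq I, forall x, exists i, List.In i s /\ U i x;
  psep : forall x y, ~ ple x y ->
      exists U, popen U /\ popen (fun z => ~ U z) /\
        (forall a b, ple a b -> U a -> U b) /\ U x /\ ~ U y
}.
Arguments ple {p} _ _.
Arguments popen {p} _.

Record pmorph (X Y : Priestley) := {
  pfun :> X -> Y;
  pmono : forall x x', ple x x' -> ple (pfun x) (pfun x');
  pcont : forall U : Y -> Prop, popen U -> popen (fun x => U (pfun x))
}.

(* P(X, 2): continuous order-preserving maps into the discrete
   two-element chain (false < true). Continuity into a discrete space:
   the preimage of every subset is open. *)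
Definition is_p2 (X : Priestley) (al : X -> bool) : Prop :=
  (forall x y, ple x y -> al x -> al y) /\
  (forall S : bool -> Prop, popen (fun x => S (al x))).

Definition P2 (X : Priestley) := {al : X -> bool | is_p2 al}.

Lemma precomp_p2 (X Y : Priestley) (f : pmorph X Y) (al : P2 Y) :
  is_p2 (fun x => sval al (f x)).
Proof.
case: al => a [Ha1 Ha2]; split => /=.
- by move=> x y Hxy; apply: Ha1; apply: pmono.
- by move=> S; exact: (pcont f (Ha2 S)).
Qed.

Definition precomp (X Y : Priestley) (f : pmorph X Y) (al : P2 Y) : P2 X :=
  exist _ (fun x => sval al (f x)) (precomp_p2 f al).

Record category := {
  Obj : Type;
  Hom : Obj -> Obj -> Type;
  idm : forall X, Hom X X;
  compose : forall X Y Z, Hom Y Z -> Hom X Y -> Hom X Z;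
  comp_assoc : forall W X Y Z (h : Hom Y Z) (g : Hom X Y) (f : Hom W X),
      compose h (compose g f) = compose (compose h g) f;
  comp_idl : forall X Y (f : Hom X Y), compose (idm Y) f = f;
  comp_idr : forall X Y (f : Hom X Y), compose f (idm X) = f;
  flat : Obj -> Priestley;
  flatm : forall X Y, Hom X Y -> pmorph (flat X) (flat Y);
  flat_id : forall X x, flatm (idm X) x = x;
  flat_comp : forall X Y Z (g : Hom Y Z) (f : Hom X Y) x,
      flatm (compose g f) x = flatm g (flatm f x)
}.
Arguments Hom {c} _ _.
Arguments idm {c} _.
Arguments compose {c X Y Z} _ _.
Arguments flat {c} _.
Arguments flatm {c X Y} _.

Record signature := { sym : Type; ar : sym -> nat }.

Record algebra (S : signature) := {
  car :> Type;
  interp : forall o : sym S, ('I_(ar o) -> car) -> car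
}.
Arguments interp {S} _ _ _.

Inductive term (S : signature) : Type :=
| Var : nat -> term S
| App : forall o : sym S, ('I_(ar o) -> term S) -> term S.

Fixpoint eval (S : signature) (A : algebra S) (v : nat -> A) (t : term S) : A :=
  match t with
  | Var n => v n
  | App o args => interp A o (fun i => @eval S A v (args i))
  end.
Arguments eval {S} A v t.

Fixpoint vars_in (S : signature) (P : nat -> Prop) (t : term S) : Prop :=
  match t with
  | Var n => P n
  | App o args => forall i, @vars_in S P (args i)
  end.
Arguments vars_in {S} P t.

Definition model_of (S : signature) (Eqs : term S -> term S -> Prop)
  (A : algebra S) : Prop :=
  forall t u, Eqs t u -> forall v : nat -> A, eval A v t = eval A v u.

Definition bin_op (S : signature) (A : algebra S) (t : term S) (a b : A) : A :=
  eval A (fun n => if n is 0 then a else b) t.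
Arguments bin_op {S} A t a b.

Definition is_bdl (T : Type) (m j : T -> T -> T) (bot top : T) : Prop :=
  (forall x y z, m x (m y z) = m (m x y) z) /\
  (forall x y z, j x (j y z) = j (j x y) z) /\
  (forall x y, m x y = m y x) /\
  (forall x y, j x y = j y x) /\
  (forall x y, m x (j x y) = x) /\
  (forall x y, j x (m x y) = x) /\
  (forall x y z, m x (j y z) = j (m x y) (m x z)) /\
  (forall x, j x bot = x) /\
  (forall x, m x top = x).

(* A variety (given by a set of identities) with a term reduct in D:
   binary terms for meet/join (in variables 0,1) and closed terms for
   0/1 such that every member is a bounded distributive lattice. *)
Record variety (S : signature) := {
  Eqs : term S -> term S -> Prop;
  tmeet : term S; tjoin : term S; tbot : term S; ttop : term S;
  tmeet_vars : vars_in (fun n => n = 0 \/ n = 1) tmeet;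
  tjoin_vars : vars_in (fun n => n = 0 \/ n = 1) tjoin;
  tbot_closed : vars_in (fun _ => False) tbot;
  ttop_closed : vars_in (fun _ => False) ttop;
  reduct_bdl : forall A : algebra S, model_of Eqs A ->
      forall v : nat -> A,
        is_bdl (bin_op A tmeet) (bin_op A tjoin) (eval A v tbot) (eval A v ttop)
}.

Record member (S : signature) (V : variety S) := {
  malg :> algebra S;
  mmodel : model_of (Eqs V) malg
}.

Definition is_hom (S : signature) (A B : algebra S) (f : A -> B) : Prop :=
  forall o (args : 'I_(ar o) -> A), f (interp A o args) = interp B o (fun i => f (args i)).

Definition hom_alg (S : signature) (A B : algebra S) := {f : A -> B | is_hom f}.

Definition bdl_hom (S : signature) (V : variety S) (A : algebra S) (h : A -> bool) : Prop :=
  (forall a b, h (bin_op A (tmeet V) a b) = h a && h b) /\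
  (forall a b, h (bin_op A (tjoin V) a b) = h a || h b) /\
  (forall v, h (eval A v (tbot V)) = false) /\
  (forall v, h (eval A v (ttop V)) = true).

(* open sets of the product topology on 2^A (2 discrete) *)
Definition prod_open (A : Type) (W : (A -> bool) -> Prop) : Prop :=
  forall f, W f -> exists s : seq (A * bool),
    (forall p, List.In p s -> f p.1 = p.2) /\
    (forall g, (forall p, List.In p s -> g p.1 = p.2) -> W g).

Definition prod_alg (S : signature) (A B : algebra S) : algebra S :=
  {| car := (A * B)%type;
     interp := fun o args => (interp A o (fun i => (args i).1),
                              interp B o (fun i => (args i).2)) |}.

Definition subuniverse (S : signature) (A : algebra S) (B : A -> Prop) : Prop :=
  forall o (args : 'I_(ar o) -> A), (forall i, B (args i)) -> B (interp A o args).

Definition is_subalgebra (S : signature) (A : algebra S) (B : A -> Prop) : Prop :=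
  (exists a, B a) /\ subuniverse B.

Definition subalg (S : signature) (A : algebra S) (B : A -> Prop)
  (HB : subuniverse B) : algebra S :=
  {| car := {a : A | B a};
     interp := fun o args =>
       exist _ (interp A o (fun i => sval (args i)))
             (HB o _ (fun i => proj2_sig (args i))) |}.

Lemma eval_prod (S : signature) (A B : algebra S) v (t : term S) :
  eval (prod_alg A B) v t = (eval A (fun n => (v n).1) t, eval B (fun n => (v n).2) t).
Proof.
elim: t => [n|o args IH] /=; first by case: (v n).
have E1 : (fun i => (eval (prod_alg A B) v (args i)).1) =
          (fun i => eval A (fun n => (v n).1) (args i)).
  by apply: functional_extensionality => i; rewrite IH.
have E2 : (fun i => (eval (prod_alg A B) v (args i)).2) =
          (fun i => eval B (fun n => (v n).2) (args i)).
  by apply: functional_extensionality => i; rewrite IH.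
by rewrite E1 E2.
Qed.

Lemma eval_sub (S : signature) (A : algebra S) (B : A -> Prop) (HB : subuniverse B)
  v (t : term S) : sval (eval (subalg HB) v t) = eval A (fun n => sval (v n)) t.
Proof.
elim: t => [n|o args IH] //=.
have E : (fun i => sval (eval (subalg HB) v (args i))) =
         (fun i => eval A (fun n => sval (v n)) (args i)).
  by apply: functional_extensionality => i; rewrite IH.
by rewrite E.
Qed.

Lemma model_prod (S : signature) (Eq : term S -> term S -> Prop) (A B : algebra S) :
  model_of Eq A -> model_of Eq B -> model_of Eq (prod_alg A B).
Proof.
move=> HA HB t u Htu v; rewrite !eval_prod.
by rewrite (HA t u Htu) (HB t u Htu).
Qed.

Lemma model_sub (S : signature) (Eq : term S -> term S -> Prop) (A : algebra S)
  (B : A -> Prop) (HB : subuniverse B) : model_of Eq A -> model_of Eq (subalg HB).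
Proof.
move=> HA t u Htu v; apply: eq_sig_hprop.
  by move=> x p q; apply: proof_irrelevance.
by rewrite !eval_sub (HA t u Htu).
Qed.

Arguments mmodel {S V} m.
Arguments malg {S V} m.
Arguments bdl_hom {S} V A h.
Arguments is_hom {S} A B f.
Arguments model_sub {S Eq A B} HB _.
Arguments model_prod {S Eq A B} _ _.
Arguments subalg {S A B} HB.

Unset Implicit Arguments.
Definition sub_member (S : signature) (V : variety S) (A1 A2 : member V)
  (B : prod_alg A1 A2 -> Prop) (HB : subuniverse B) : member V :=
  {| malg := subalg HB;
     mmodel := model_sub HB (model_prod (mmodel A1) (mmodel A2)) |}.

Definition rho1 (S : signature) (A1 A2 : algebra S) (B : prod_alg A1 A2 -> Prop)
  (HB : subuniverse B) : hom_alg (subalg HB) A1 :=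
  exist (fun f : subalg HB -> _ => is_hom (subalg HB) _ f) (fun p : subalg HB => (sval p).1) (fun o args => erefl).
Definition rho2 (S : signature) (A1 A2 : algebra S) (B : prod_alg A1 A2 -> Prop)
  (HB : subuniverse B) : hom_alg (subalg HB) A2 :=
  exist (fun f : subalg HB -> _ => is_hom (subalg HB) _ f) (fun p : subalg HB => (sval p).2) (fun o args => erefl).

(* The functor E on objects: E(X) has universe P(X^flat, 2); only the
   interpretation of the fundamental operations is data. *)
Definition Eops_type (S : signature) (C : category) :=
  forall (X : Obj C) (o : sym S), ('I_(ar o) -> P2 (flat X)) -> P2 (flat X).

Definition Ealg_of (S : signature) (C : category) (Eo : Eops_type S C) (X : Obj C)
  : algebra S := {| car := P2 (flat X); interp := Eo X |}.
Arguments Ealg_of {S C} Eo X.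

Record RPD (S : signature) (V : variety S) (C : category) := {
  D : member V -> Obj C;
  Dmor : forall A B : member V, hom_alg A B -> Hom (D B) (D A);
  Dmor_id : forall (A : member V) (f : hom_alg A A),
      (forall a, sval f a = a) -> Dmor A A f = idm (D A);
  Dmor_comp : forall (A B Z : member V) (f : hom_alg A B) (g : hom_alg B Z)
      (h : hom_alg A Z), (forall a, sval h a = sval g (sval f a)) ->
      Dmor A Z h = compose (Dmor A B f) (Dmor B Z g);
  (* E : X -> A; flat o E = K o flat *)
  Eops : Eops_type S C;
  E_in : forall X, model_of (Eqs V) (Ealg_of Eops X);
  E_meet : forall X (a b : P2 (flat X)) x,
      sval (bin_op (Ealg_of Eops X) (tmeet V) a b) x = sval a x && sval b x;
  E_join : forall X (a b : P2 (flat X)) x,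
      sval (bin_op (Ealg_of Eops X) (tjoin V) a b) x = sval a x || sval b x;
  E_bot : forall X v x, sval (eval (Ealg_of Eops X) v (tbot V)) x = false;
  E_top : forall X v x, sval (eval (Ealg_of Eops X) v (ttop V)) x = true;
  E_hom : forall X Y (phi : Hom X Y),
      is_hom (Ealg_of Eops Y) (Ealg_of Eops X) (precomp (flatm phi));
  (* flat o D = H o flat: D(A)^flat is identified, via kappa_A, with
     the Priestley space D(A^flat, 2) (order and topology from 2^A). *)
  kappa : forall A : member V, flat (D A) -> A -> bool;
  kappa_inj : forall A y y', kappa A y = kappa A y' -> y = y';
  kappa_img : forall (A : member V) (h : A -> bool),
      bdl_hom V A h <-> exists y, kappa A y = h;
  kappa_ord : forall A y y', ple y y' <-> (forall a, kappa A y a -> kappa A y' a);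
  kappa_top : forall A (U : flat (D A) -> Prop),
      popen U <-> exists W, prod_open W /\ (forall y, U y <-> W (kappa A y));
  Dmor_flat : forall (A B : member V) (f : hom_alg A B) y a,
      kappa A (flatm (Dmor A B f) y) a = kappa B y (sval f a);
  (* unit e : id -> ED, natural isomorphism with e_A^flat = e_{A^flat} *)
  e : forall A : member V, hom_alg A (Ealg_of Eops (D A));
  e_bij : forall A, bijective (sval (e A));
  e_flat : forall (A : member V) a y, sval (sval (e A) a) y = kappa A y a;
  e_nat : forall (A B : member V) (f : hom_alg A B) a,
      sval (e B) (sval f a) = precomp (flatm (Dmor A B f)) (sval (e A) a);
  (* counit eps : id -> DE, natural isomorphism with eps^flat = eps_{X^flat} *)
  eps : forall X, Hom X (D {| malg := Ealg_of Eops X; mmodel := E_in X |});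
  eps_iso : forall X, exists g, compose g (eps X) = idm X /\ compose (eps X) g = idm _;
  eps_flat : forall X (x : flat X) (al : P2 (flat X)),
      kappa {| malg := Ealg_of Eops X; mmodel := E_in X |} (flatm (eps X) x) al
        = sval al x;
  eps_nat : forall X Y (phi : Hom X Y),
      compose (Dmor {| malg := Ealg_of Eops Y; mmodel := E_in Y |}
                 {| malg := Ealg_of Eops X; mmodel := E_in X |}
                 (exist _ (precomp (flatm phi)) (E_hom X Y phi))) (eps X)
      = compose (eps Y) phi
}.

Arguments RPD {S} V C.
Arguments D {S V C} r A.
Arguments Dmor {S V C} r {A B} f.
Arguments eps {S V C} r X.
Arguments Eops {S V C} r X o _.
Arguments E_in {S V C} r X.
Arguments kappa {S V C} r A _ _.
Arguments e {S V C} r A.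

Definition Ealg (S : signature) (V : variety S) (C : category) (R : RPD V C)
  (X : Obj C) : algebra S := Ealg_of (Eops R) X.
Definition Emem (S : signature) (V : variety S) (C : category) (R : RPD V C)
  (X : Obj C) : member V := {| malg := Ealg_of (Eops R) X; mmodel := E_in R X |}.
Arguments Ealg {S V C} R X.
Arguments Emem {S V C} R X.

Definition Bset (C : category) (X1 X2 Y : Obj C) (phi1 : Hom X1 Y) (phi2 : Hom X2 Y)
  (p : P2 (flat X1) * P2 (flat X2)) : Prop :=
  exists al : P2 (flat Y), p = (precomp (flatm phi1) al, precomp (flatm phi2) al).

Definition Bmap (C : category) (X1 X2 Y : Obj C) (phi1 : Hom X1 Y) (phi2 : Hom X2 Y)
  (al : P2 (flat Y)) : P2 (flat X1) * P2 (flat X2) :=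
  (precomp (flatm phi1) al, precomp (flatm phi2) al).

Definition P_surj (C : category) (X Y : Obj C) (phi : Hom X Y) : Prop :=
  forall y : flat Y, exists x, flatm phi x = y.

Definition jointly_P_surj (C : category) (X1 X2 Y : Obj C)
  (phi1 : Hom X1 Y) (phi2 : Hom X2 Y) : Prop :=
  forall y : flat Y, (exists x, flatm phi1 x = y) \/ (exists x, flatm phi2 x = y).

Definition ordered_disjoint_union (C : category) (X1 X2 Y : Obj C)
  (phi1 : Hom X1 Y) (phi2 : Hom X2 Y) : Prop :=
  let I1 := fun y => exists x, flatm phi1 x = y in
  let I2 := fun y => exists x, flatm phi2 x = y in
  (forall y, I1 y \/ I2 y) /\ (forall y, ~ (I1 y /\ I2 y)) /\
  (forall y1 y2, I1 y1 -> I2 y2 -> ~ ple y1 y2 /\ ~ ple y2 y1).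

Definition injective_partial_map_graph (T U : Type) (G : T * U -> Prop) : Prop :=
  (forall a b b', G (a, b) -> G (a, b') -> b = b') /\
  (forall a a' b, G (a, b) -> G (a', b) -> a = a').

Arguments Bset {C X1 X2 Y} phi1 phi2 p.
Arguments Bmap {C X1 X2 Y} phi1 phi2 al.
Arguments P_surj {C X Y} phi.
Arguments jointly_P_surj {C X1 X2 Y} phi1 phi2.
Arguments ordered_disjoint_union {C X1 X2 Y} phi1 phi2.
Arguments injective_partial_map_graph {T U} G.
Arguments sub_member {S V} A1 A2 B HB.
Arguments rho1 {S A1 A2 B} HB.
Arguments rho2 {S A1 A2 B} HB.
Arguments is_subalgebra {S} A B.

(* The argument rests on one separation lemma: if y lies outside the image of a
   Priestley map f : X -> Y, compactness of X yields clopen up-sets m, j of Y with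
   y in m but not in j, and every point of f(X) in m also in j.  Hence
   precomposition with f is injective iff f is onto, and the complement of f(X) is
   open.  In D(B) the same lemma, transported to B along the unit e, shows that the
   two maps of (2) jointly cover D(B).  Part (3) reduces to asking whether clopen
   up-sets prescribed separately on the two images always glue, which happens
   exactly when the images are clopen, disjoint and mutually incomparable. *)

From mathcomp Require Import all_boot.
From Stdlib Require Import Classical ClassicalEpsilon FunctionalExtensionality.
From Stdlib Require Import PropExtensionality ProofIrrelevance.
From Stdlib Require List.
Set Implicit Arguments. Unset Strict Implicit. Unset Printing Implicit Defensive.

Definition asbool (P : Prop) : bool := if excluded_middle_informative P then true else false.

Lemma asboolT (P : Prop) : P -> asbool P = true.
Proof. by rewrite /asbool; case: excluded_middle_informative. Qed.

Lemma asboolF (P : Prop) : ~ P -> asbool P = false.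
Proof. by rewrite /asbool; case: excluded_middle_informative. Qed.

Section PriestleyClopens.
Variable X : Priestley.

Lemma popen_ext (U W : X -> Prop) : popen U -> (forall x, U x <-> W x) -> popen W.
Proof.
move=> HU UW; suff -> : W = U by [].
apply: functional_extensionality => x.
by apply: propositional_extensionality; have := UW x; tauto.
Qed.

Lemma popen_empty : popen (fun _ : X => False).
Proof.
apply: (popen_ext (popen_union (F := fun _ => False) _)) => // x.
by split=> [[? []]|].
Qed.

Lemma popen_const (P : Prop) : popen (fun _ : X => P).
Proof.
case: (classic P) => HP.
  by apply: (popen_ext (popen_full X)).
by apply: (popen_ext popen_empty).
Qed.

Lemma popen_or (U W : X -> Prop) : popen U -> popen W -> popen (fun x => U x \/ W x).
Proof.
move=> HU HW; apply: (popen_ext (popen_union (F := fun Z => Z = U \/ Z = W) _)).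
  by move=> Z [->|->].
move=> x; split; first by case=> Z [[->|->] ?]; [left|right].
by case=> ?; [exists U | exists W]; split=> //; [left|right].
Qed.

Lemma P2_ext (a b : P2 X) : (forall x, sval a x = sval b x) -> a = b.
Proof.
move=> ab; apply: eq_sig_hprop; first by move=> ? ? ?; apply: proof_irrelevance.
exact: functional_extensionality.
Qed.

Lemma p2_open_level (a : P2 X) (t : bool) : popen (fun x => sval a x = t).
Proof. exact: (proj2 (proj2_sig a) (fun u => u = t)). Qed.

Lemma p2_open_pair (a b : P2 X) (Q : bool -> bool -> Prop) :
  popen (fun x => Q (sval a x) (sval b x)).
Proof.
pose cell u v x := (sval a x = u /\ sval b x = v) /\ Q u v.
have open_cell u v : popen (cell u v).
  exact: popen_inter (popen_inter (p2_open_level a u) (p2_open_level b v)) (popen_const _).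
apply: (popen_ext (popen_or (popen_or (open_cell true true) (open_cell true false))
                            (popen_or (open_cell false true) (open_cell false false)))).
move=> x; rewrite /cell; split.
  by case=> [[]|[]] [[-> ->] ?].
by case: (sval a x); case: (sval b x); tauto.
Qed.

Definition constP2 (c : bool) : P2 X :=
  exist _ (fun _ => c) (conj (fun _ _ _ => id) (fun _ => popen_const _)).

Lemma andP2_proof (a b : P2 X) : is_p2 (fun x => sval a x && sval b x).
Proof.
split; last by move=> Q; apply: (p2_open_pair a b (fun u v => Q (u && v))).
move=> x y xy /andP[ax bx]; apply/andP.
by split; [apply: (proj1 (proj2_sig a) x) | apply: (proj1 (proj2_sig b) x)].
Qed.

Lemma orP2_proof (a b : P2 X) : is_p2 (fun x => sval a x || sval b x).
Proof.
split; last by move=> Q; apply: (p2_open_pair a b (fun u v => Q (u || v))).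
move=> x y xy /orP[ax|bx]; apply/orP.
  by left; apply: (proj1 (proj2_sig a) x).
by right; apply: (proj1 (proj2_sig b) x).
Qed.

Definition andP2 (a b : P2 X) : P2 X := exist _ _ (andP2_proof a b).
Definition orP2 (a b : P2 X) : P2 X := exist _ _ (orP2_proof a b).

Lemma clopen_up_p2_proof (U : X -> Prop) :
  popen U -> popen (fun x => ~ U x) -> (forall x y, ple x y -> U x -> U y) ->
  is_p2 (fun x => asbool (U x)).
Proof.
move=> HU HnU Uup; split.
  move=> x y xy; case: (classic (U x)) => Ux; last by rewrite asboolF.
  by rewrite (asboolT (Uup _ _ xy Ux)).
move=> Q; apply: (popen_ext (popen_or (popen_inter HU (popen_const (Q true)))
                                      (popen_inter HnU (popen_const (Q false))))).
by move=> x; case: (classic (U x)) => Ux; [rewrite asboolT | rewrite asboolF]; tauto.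
Qed.

Lemma p2_separates_le (x y : X) : ~ ple x y -> exists a : P2 X, sval a x && ~~ sval a y.
Proof.
case/psep=> U [HU [HnU [Uup [Ux Uy]]]].
by exists (exist _ _ (clopen_up_p2_proof HU HnU Uup)); rewrite /= asboolT // asboolF.
Qed.

Lemma p2_separates (x y : X) : x <> y -> exists a : P2 X, sval a x != sval a y.
Proof.
move=> xy; case: (classic (ple x y)) => [le_xy|nle_xy].
  have nle_yx : ~ ple y x by move=> le_yx; apply: xy; apply: ple_anti.
  by have [a /andP[ay nax]] := p2_separates_le nle_yx; exists a; rewrite (negbTE nax) ay.
by have [a /andP[ax nay]] := p2_separates_le nle_xy; exists a; rewrite (negbTE nay) ax.
Qed.

Lemma p2_piecewise_proof (U : X -> Prop) (a b : P2 X) :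
  popen U -> popen (fun x => ~ U x) -> (forall x y, ple x y -> U x <-> U y) ->
  is_p2 (fun x => if asbool (U x) then sval a x else sval b x).
Proof.
move=> HU HnU Ucomp; split.
  move=> x y xy; case: (classic (U x)) => Ux.
    by rewrite asboolT // asboolT; [apply: (proj1 (proj2_sig a)) | apply/(Ucomp _ _ xy)].
  rewrite asboolF // asboolF; first by apply: (proj1 (proj2_sig b)).
  by move/(Ucomp _ _ xy).
move=> Q; apply: (popen_ext (popen_or (popen_inter HU (p2_open_pair a a (fun u _ => Q u)))
                                      (popen_inter HnU (p2_open_pair b b (fun u _ => Q u))))).
by move=> x; case: (classic (U x)) => Ux; [rewrite asboolT | rewrite asboolF]; tauto.
Qed.

End PriestleyClopens.

Lemma finite_separation (Y : Priestley) (y : Y) (s : seq (P2 Y)) :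
  exists m j : P2 Y, sval m y && ~~ sval j y /\
    forall z, (exists2 b, List.In b s & sval b z != sval b y) -> sval m z ==> sval j z.
Proof.
elim: s => [|b s [m [j [/andP[my njy] mj]]]].
  by exists (constP2 Y true), (constP2 Y false); split=> // z [].
case b_y: (sval b y).
  exists (andP2 m b), j; rewrite /= my b_y njy; split=> // z [c [<-|cs] czy] /=.
    by move: czy; rewrite b_y eqb_id => /negbTE ->; rewrite andbF.
  by apply/implyP => /andP[mz _]; apply: (implyP (mj z _)) mz; exists c.
exists m, (orP2 j b); rewrite /= my b_y orbF njy; split=> // z [c [<-|cs] czy] /=.
  by move: czy; rewrite b_y eqbF_neg negbK => ->; rewrite orbT implybT.
by apply/implyP => mz; rewrite (implyP (mj z _) mz) //; exists c.
Qed.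

Section ImageOfPriestleyMap.
Variables (X Y : Priestley) (f : pmorph X Y).

Lemma separate_from_image (y : Y) : (forall x, f x <> y) ->
  exists m j : P2 Y, sval m y && ~~ sval j y /\ forall x, sval m (f x) ==> sval j (f x).
Proof.
move=> y_out.
have open_sep (b : P2 Y) : popen (fun x => sval b (f x) != sval b y).
  exact: (proj2 (proj2_sig (precomp f b)) (fun t => t != sval b y)).
have [s cover] := pcompact open_sep (fun x => p2_separates (y_out x)).
have [m [j [mj_y mj]]] := finite_separation y s.
exists m, j; split=> // x; apply: mj.
by have [b [bs bxy]] := cover x; exists b.
Qed.

Lemma image_complement_open : popen (fun y => forall x, f x <> y).
Proof.
pose F W := popen W /\ forall y, W y -> forall x, f x <> y.
apply: (popen_ext (popen_union (F := F) (fun W (FW : F W) => proj1 FW))).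
move=> y; split; first by case=> W [[_ W_out] Wy]; apply: W_out.
case/separate_from_image=> m [j [mj_y mj]].
exists (fun z => sval m z && ~~ sval j z); split=> //; split.
  exact: (p2_open_pair m j (fun u v => u && ~~ v)).
by move=> z /andP[mz njz] x fxz; move: (mj x); rewrite fxz mz (negbTE njz).
Qed.

Lemma precomp_injective_iff_surjective :
  injective (precomp f) <-> forall y, exists x, f x = y.
Proof.
split=> [inj_f y | surj_f a b ab]; last first.
  by apply: P2_ext => y; have [x <-] := surj_f y; exact: (congr1 (fun c => sval c x) ab).
apply: NNPP => y_out.
have [m [j [/andP[my njy] mj]]] :=
  @separate_from_image y (fun x fxy => y_out (ex_intro _ x fxy)).
have : orP2 m j = j.
  apply: inj_f; apply: P2_ext => x /=.
  by case: (sval m (f x)) (mj x) => // /= ->.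
by move/(congr1 (fun c => sval c y)); rewrite /= my (negbTE njy).
Qed.

End ImageOfPriestleyMap.

Lemma image_subalgebra (S : signature) (A B : algebra S) (f : A -> B) (a0 : A) :
  is_hom A B f -> is_subalgebra B (fun b => exists a, b = f a).
Proof.
move=> f_hom; split; first by exists (f a0), a0.
move=> o args args_im.
have [g args_g] : exists g : 'I_(ar o) -> A, forall i, args i = f (g i).
  by exists (fun i => proj1_sig (constructive_indefinite_description _ (args_im i)))
     => i; case: constructive_indefinite_description.
exists (interp A o g); rewrite f_hom; congr interp.
exact: functional_extensionality.
Qed.

Lemma prod_bin_op (S : signature) (A B : algebra S) (t : term S) (p q : prod_alg A B) :
  bin_op (prod_alg A B) t p q = (bin_op A t p.1 q.1, bin_op B t p.2 q.2).
Proof.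
rewrite /bin_op eval_prod; congr pair; congr eval; apply: functional_extensionality; by case.
Qed.

Lemma sub_bin_op (S : signature) (A : algebra S) (B : A -> Prop) (HB : subuniverse B)
  (t : term S) (a b : subalg HB) :
  sval (bin_op (subalg HB) t a b) = bin_op A t (sval a) (sval b).
Proof.
rewrite /bin_op eval_sub; congr eval; apply: functional_extensionality; by case.
Qed.

Lemma partial_injection_graph_image (T U1 U2 : Type) (f1 : T -> U1) (f2 : T -> U2) :
  injective (fun t => (f1 t, f2 t)) ->
  injective_partial_map_graph (fun p => exists t, p = (f1 t, f2 t)) <->
  injective f1 /\ injective f2.
Proof.
move=> inj_f; split=> [[fun1 fun2] | [inj1 inj2]].
  split=> t t' ftt'; apply: inj_f; congr pair => //.
    by apply: (fun1 (f1 t)); [exists t | exists t'; rewrite ftt'].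
  by apply: (fun2 _ _ (f2 t)); [exists t | exists t'; rewrite ftt'].
split=> [a b b' [t [-> ->]] [t' [ftt' ->]] | a a' b [t [-> ->]] [t' [-> ftt']]].
  by rewrite (inj1 _ _ ftt').
by rewrite (inj2 _ _ ftt').
Qed.

Section RestrictedPriestleyDuality.
Variables (S : signature) (V : variety S) (C : category) (R : RPD V C).

(* Naturality of the counit eps, an isomorphism, recovers phi from E(phi) = precomp phi. *)
Lemma flat_faithful (X Y : Obj C) (phi1 phi2 : Hom X Y) :
  (forall x, flatm phi1 x = flatm phi2 x) -> phi1 = phi2.
Proof.
move=> phi12.
have [g [g_eps _]] := eps_iso _ _ _ R Y.
rewrite -[phi1]comp_idl -[phi2]comp_idl -g_eps -!comp_assoc -!eps_nat.
have Ephi : precomp (flatm phi1) = precomp (flatm phi2).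
  by apply: functional_extensionality => al; apply: P2_ext => x /=; rewrite phi12.
move: (E_hom _ _ _ R X Y phi1) (E_hom _ _ _ R X Y phi2); rewrite Ephi => h1 h2.
by rewrite (proof_irrelevance _ h1 h2).
Qed.

Lemma Bset_diagonal_iff (X Y : Obj C) (phi1 phi2 : Hom X Y) :
  (forall p, Bset phi1 phi2 p -> p.1 = p.2) <-> phi1 = phi2.
Proof.
split=> [diag | -> p [al ->] //].
apply: flat_faithful => x; apply: NNPP => /p2_separates[al].
by have /= /(congr1 (fun c => sval c x)) /= -> := diag _ (ex_intro _ al erefl); rewrite eqxx.
Qed.

Section TwoMapsIntoY.
Variables (X1 X2 Y : Obj C) (phi1 : Hom X1 Y) (phi2 : Hom X2 Y).

Lemma Bmap_hom : is_hom (Ealg R Y) (prod_alg (Ealg R X1) (Ealg R X2)) (Bmap phi1 phi2).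
Proof. by move=> o args; congr pair; apply: E_hom. Qed.

Lemma Bset_subalgebra : is_subalgebra (prod_alg (Ealg R X1) (Ealg R X2)) (Bset phi1 phi2).
Proof. exact: (@image_subalgebra _ (Ealg R Y) _ _ (constP2 _ false) Bmap_hom). Qed.

Lemma Bmap_injective : jointly_P_surj phi1 phi2 -> injective (Bmap phi1 phi2).
Proof.
move=> surj12 a b ab; apply: P2_ext => y.
case: (surj12 y) => -[x <-].
  exact: (congr1 (fun p => sval p.1 x) ab).
exact: (congr1 (fun p => sval p.2 x) ab).
Qed.

Lemma Bset_partial_injection_iff : jointly_P_surj phi1 phi2 ->
  injective_partial_map_graph (Bset phi1 phi2) <-> P_surj phi1 /\ P_surj phi2.
Proof.
move=> surj12.
rewrite (partial_injection_graph_image (Bmap_injective surj12)).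
by rewrite !precomp_injective_iff_surjective.
Qed.

Definition images_glue : Prop := forall a b : P2 (flat Y), exists g,
  precomp (flatm phi1) g = precomp (flatm phi1) a /\
  precomp (flatm phi2) g = precomp (flatm phi2) b.

Lemma Bset_product_iff_images_glue :
  (exists (B1 : Ealg R X1 -> Prop) (B2 : Ealg R X2 -> Prop),
     is_subalgebra (Ealg R X1) B1 /\ is_subalgebra (Ealg R X2) B2 /\
     (forall p, Bset phi1 phi2 p <-> B1 p.1 /\ B2 p.2)) <-> images_glue.
Proof.
rewrite /images_glue; split=> [[B1 [B2 [_ [_ B12]]]] a b | glue].
  have [B1a _] := proj1 (B12 (Bmap phi1 phi2 a)) (ex_intro _ a erefl).
  have [_ B2b] := proj1 (B12 (Bmap phi1 phi2 b)) (ex_intro _ b erefl).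
  have [g Eg] := proj2 (B12 (precomp (flatm phi1) a, precomp (flatm phi2) b)) (conj B1a B2b).
  by exists g; split; [exact: (esym (congr1 fst Eg)) | exact: (esym (congr1 snd Eg))].
exists (fun a => exists al, a = precomp (flatm phi1) al),
       (fun b => exists al, b = precomp (flatm phi2) al).
split; first exact: (@image_subalgebra _ (Ealg R Y) _ _ (constP2 _ false) (E_hom _ _ _ R _ _ phi1)).
split; first exact: (@image_subalgebra _ (Ealg R Y) _ _ (constP2 _ false) (E_hom _ _ _ R _ _ phi2)).
move=> p; split=> [[al ->] | [[a Ea] [b Eb]]]; first by split; exists al.
have [g [ga gb]] := glue a b.
by exists g; rewrite [p]surjective_pairing Ea Eb -ga -gb.
Qed.

Lemma images_glue_ordered_disjoint_union :
  jointly_P_surj phi1 phi2 -> images_glue -> ordered_disjoint_union phi1 phi2.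
Proof.
move=> surj12 glue.
have indicator u : exists g : P2 (flat Y),
    (forall x, sval g (flatm phi1 x) = u) /\ (forall x, sval g (flatm phi2 x) = ~~ u).
  have [g [g1 g2]] := glue (constP2 _ u) (constP2 _ (~~ u)).
  exists g; split=> x; first exact: (congr1 (fun c => sval c x) g1).
  exact: (congr1 (fun c => sval c x) g2).
split=> //; split.
  move=> y [[x1 <-] [x2 E]]; have [g [g1 g2]] := indicator true.
  by move: (g2 x2); rewrite E g1.
move=> y1 y2 [x1 <-] [x2 <-]; split=> le12.
  have [g [g1 g2]] := indicator true.
  by move: (proj1 (proj2_sig g) _ _ le12); rewrite g1 g2 => /(_ isT).
have [g [g1 g2]] := indicator false.
by move: (proj1 (proj2_sig g) _ _ le12); rewrite g1 g2 => /(_ isT).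
Qed.

Lemma ordered_disjoint_union_images_glue :
  ordered_disjoint_union phi1 phi2 -> images_glue.
Proof.
case=> cover [disj incomp] a b.
pose I1 y := exists x, flatm phi1 x = y.
have I1_open : popen I1.
  apply: (popen_ext (image_complement_open (flatm phi2))) => y; split.
    by move=> out2; case: (cover y) => // -[x2 E2]; case: (out2 x2).
  by move=> in1 x2 E2; apply: (disj y); split=> //; exists x2.
have I1_closed : popen (fun y => ~ I1 y).
  apply: (popen_ext (image_complement_open (flatm phi1))) => y; split.
    by move=> out1 [x1 E1]; apply: (out1 x1).
  by move=> nin1 x1 E1; apply: nin1; exists x1.
have I1_convex y y' : ple y y' -> I1 y <-> I1 y'.
  move=> le_yy'; split=> [I1y | I1y']; apply: NNPP.
    by move=> nI1y'; case: (cover y') => // I2y'; case: (incomp _ _ I1y I2y').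
  by move=> nI1y; case: (cover y) => // I2y; case: (incomp _ _ I1y' I2y) => _; apply.
exists (exist _ _ (p2_piecewise_proof a b I1_open I1_closed I1_convex)).
split; apply: P2_ext => x /=; first by rewrite asboolT //; exists x.
by rewrite asboolF // => I1x; apply: (disj (flatm phi2 x)); split=> //; exists x.
Qed.

End TwoMapsIntoY.

Section DualOfSubalgebra.
Variables (X1 X2 : Obj C) (B : prod_alg (Ealg R X1) (Ealg R X2) -> Prop)
  (HB : is_subalgebra (prod_alg (Ealg R X1) (Ealg R X2)) B).
Let Bm := sub_member (Emem R X1) (Emem R X2) B (proj2 HB).
Let vphi1 := compose (@Dmor S V C R Bm (Emem R X1) (rho1 (proj2 HB))) (eps R X1).
Let vphi2 := compose (@Dmor S V C R Bm (Emem R X2) (rho2 (proj2 HB))) (eps R X2).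

Lemma e_vphi1 (b : Bm) x : sval (sval (e R Bm) b) (flatm vphi1 x) = sval (sval b).1 x.
Proof. by rewrite e_flat flat_comp Dmor_flat; exact: eps_flat. Qed.

Lemma e_vphi2 (b : Bm) x : sval (sval (e R Bm) b) (flatm vphi2 x) = sval (sval b).2 x.
Proof. by rewrite e_flat flat_comp Dmor_flat; exact: eps_flat. Qed.

Lemma Bmap_vphi_e (b : Bm) : Bmap vphi1 vphi2 (sval (e R Bm) b) = sval b.
Proof.
rewrite [RHS]surjective_pairing; congr pair; apply: P2_ext => x.
  exact: e_vphi1.
exact: e_vphi2.
Qed.

Lemma subalgebra_eq_Bset p : B p <-> Bset vphi1 vphi2 p.
Proof.
split=> [Bp | [al ->]].
  by exists (sval (e R Bm) (exist _ p Bp)); rewrite -[LHS]/(sval (exist B p Bp)) -Bmap_vphi_e.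
have [g _ ge] := e_bij _ _ _ R Bm.
rewrite -(ge al); change (B (Bmap vphi1 vphi2 (sval (e R Bm) (g al)))).
by rewrite Bmap_vphi_e; exact: proj2_sig.
Qed.

Lemma vphi_jointly_P_surj : jointly_P_surj vphi1 vphi2.
Proof.
move=> y; apply: NNPP => /not_or_and[out1 out2].
have [m1 [j1 [/andP[m1y nj1y] mj1]]] :=
  separate_from_image (fun x E => out1 (ex_intro _ x E)).
have [m2 [j2 [/andP[m2y nj2y] mj2]]] :=
  separate_from_image (fun x E => out2 (ex_intro _ x E)).
have [g _ ge] := e_bij _ _ _ R Bm.
pose bM := g (andP2 m1 m2); pose bJ := g (orP2 j1 j2).
have [_ [h_join _]] : bdl_hom V Bm (kappa R Bm y) by apply/kappa_img; exists y.
(* m1 /\ m2 lies below j1 \/ j2 on both images, hence bM <= bJ in B, although the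
   point y of D(B) sends bM to 1 and bJ to 0. *)
have join_MJ : bin_op Bm (tjoin V) bM bJ = bJ.
  apply: eq_sig_hprop => [? ? ? | ]; first exact: proof_irrelevance.
  rewrite sub_bin_op prod_bin_op [RHS]surjective_pairing.
  congr pair; apply: P2_ext => x; rewrite E_join.
    rewrite -!e_vphi1 /bM /bJ !ge /=.
    by case: (sval m1 (flatm vphi1 x)) (mj1 x) => //= ->; rewrite orTb orbT.
  rewrite -!e_vphi2 /bM /bJ !ge /=.
  by case: (sval m2 (flatm vphi2 x)) (mj2 x) => [/= ->|_]; rewrite ?andbF ?orbT.
move: (h_join bM bJ); rewrite join_MJ -!e_flat /bM /bJ !ge /=.
by rewrite m1y m2y (negbTE nj1y) (negbTE nj2y).
Qed.

End DualOfSubalgebra.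
End RestrictedPriestleyDuality.

Theorem theorem2p12 (S : signature) (V : variety S) (C : category) (R : RPD V C)
  (X1 X2 : Obj C) :
  (* (1) *)
  (forall (Y : Obj C) (phi1 : Hom X1 Y) (phi2 : Hom X2 Y),
     jointly_P_surj phi1 phi2 ->
     is_subalgebra (prod_alg (Ealg R X1) (Ealg R X2)) (Bset phi1 phi2) /\
     is_hom (Ealg R Y) (prod_alg (Ealg R X1) (Ealg R X2)) (Bmap phi1 phi2) /\
     injective (Bmap phi1 phi2) /\
     (forall p, Bset phi1 phi2 p <-> exists al, Bmap phi1 phi2 al = p)) /\
  (* (2) *)
  (forall (B : prod_alg (Ealg R X1) (Ealg R X2) -> Prop)
          (HB : is_subalgebra (prod_alg (Ealg R X1) (Ealg R X2)) B),
     let Bm := sub_member (Emem R X1) (Emem R X2) B (proj2 HB) in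
     let vphi1 := compose (@Dmor S V C R Bm (Emem R X1) (rho1 (proj2 HB)))
                       (eps R X1) in
     let vphi2 := compose (@Dmor S V C R Bm (Emem R X2) (rho2 (proj2 HB)))
                       (eps R X2) in
     jointly_P_surj vphi1 vphi2 /\ (forall p, B p <-> Bset vphi1 vphi2 p)) /\
  (* (3) *)
  (forall (Y : Obj C) (phi1 : Hom X1 Y) (phi2 : Hom X2 Y),
     jointly_P_surj phi1 phi2 ->
     ((exists (B1 : Ealg R X1 -> Prop) (B2 : Ealg R X2 -> Prop),
         is_subalgebra (Ealg R X1) B1 /\ is_subalgebra (Ealg R X2) B2 /\
         (forall p, Bset phi1 phi2 p <-> B1 p.1 /\ B2 p.2))
      <-> ordered_disjoint_union phi1 phi2)) /\
  (* (4) *)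
  (forall (Y : Obj C) (phi1 : Hom X1 Y) (phi2 : Hom X2 Y),
     jointly_P_surj phi1 phi2 ->
     (injective_partial_map_graph (Bset phi1 phi2) <-> P_surj phi1 /\ P_surj phi2)) /\
  (forall (X Y : Obj C) (phi1 phi2 : Hom X Y),
     jointly_P_surj phi1 phi2 ->
     ((forall p, Bset phi1 phi2 p -> p.1 = p.2) <-> phi1 = phi2)).
Proof.
split.
  move=> Y phi1 phi2 surj12; split; first exact: Bset_subalgebra.
  split; first exact: Bmap_hom.
  split; first exact: Bmap_injective.
  by move=> p; split=> -[al E]; exists al.
split; first by move=> B HB; split; [exact: vphi_jointly_P_surj | exact: subalgebra_eq_Bset].
split.
  move=> Y phi1 phi2 surj12; rewrite Bset_product_iff_images_glue.
  split; [exact: images_glue_ordered_disjoint_union | exact: ordered_disjoint_union_images_glue].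
split; first exact: Bset_partial_injection_iff.
by move=> X Y phi1 phi2 _; exact: (Bset_diagonal_iff R).
Qed.
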